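(* Let $A$ be a T-brace and let $a\in\zeta_2(\star,A)$ be an element of infinite order in $(A,+)$. Suppose that the torsion subgroup of the additive group of $\zeta(\star,A)$ is a $p$-group for some prime $p$. Then $a\star a$ has additive order at most $p$ (i.e. $p(a\star a)=0$).
   Context: A (left) brace is a set $A$ with two operations $+$ and $\cdot$ such that $(A,+)$ is an abelian group, $(A,\cdot)$ is a group, and $a(b+c)=ab+ac-a$ for all $a,b,c\in A$. Put $a\star b=ab-a-b$. A subbrace is a subset which is a subgroup of both $(A,+)$ and $(A,\cdot)$; a subbrace $L$ is an ideal if $a\star z, z\star a\in L$ for all $a\in A$, $z\in L$, and then the quotient brace $A/L$ is defined. $A$ is a T-brace if whenever $I$ is an ideal of $J$ and $J$ is an ideal of $A$, then $I$ is an ideal of $A$. The $\star$-center is $\zeta(\star,A)=\{a: a\star x=x\star a=0\ \forall x\}$; $\zeta_2(\star,A)$ is given by $\zeta_2(\star,A)/\zeta(\star,A)=\zeta(\star,A/\zeta(\star,A))$. *)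

From HB Require Import structures.
From mathcomp Require Import all_boot all_order all_algebra.
Set Implicit Arguments. Unset Strict Implicit. Unset Printing Implicit Defensive.
Import GRing.Theory.
Local Open Scope ring_scope.

Record brace (V : zmodType) := Brace {
  bmul : V -> V -> V;
  binv : V -> V;
  bone : V;
  bmulA : forall x y z, bmul x (bmul y z) = bmul (bmul x y) z;
  bmul1g : forall x, bmul bone x = x;
  bmulg1 : forall x, bmul x bone = x;
  bmulVg : forall x, bmul (binv x) x = bone;
  bmulgV : forall x, bmul x (binv x) = bone;
  bmulDr : forall a b c, bmul a (b + c) = bmul a b + bmul a c - a
}.

Section BraceDefs.
Variables (V : zmodType) (B : brace V).

Definition bstar (a b : V) : V := bmul B a b - a - b.

Definition subbrace (L : V -> Prop) : Prop :=
  [/\ L 0, (forall x y, L x -> L y -> L (x - y)),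
      L (bone B), (forall x y, L x -> L y -> L (bmul B x y))
    & (forall x, L x -> L (binv B x))].

Definition ideal_of (I J : V -> Prop) : Prop :=
  [/\ subbrace I, (forall x, I x -> J x)
    & forall a z, J a -> I z -> I (bstar a z) /\ I (bstar z a)].

Definition ideal (I : V -> Prop) : Prop := ideal_of I (fun _ => True).

Definition T_brace : Prop :=
  forall I J : V -> Prop, subbrace J -> ideal J -> ideal_of I J -> ideal I.

Definition zeta (a : V) : Prop := forall x, bstar a x = 0 /\ bstar x a = 0.

(* second star-center: zeta_2/zeta = zeta(A/zeta); unfolded, since in A/L
   (a+L) * (x+L) = (a * x) + L *)
Definition zeta2 (a : V) : Prop := forall x, zeta (bstar a x) /\ zeta (bstar x a).

End BraceDefs.

(* For a ∈ ζ₂ the star product is biadditive on ℤa + ζ, with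
   (ra + z) ⋆ (r'a + z') = rr'(a⋆a) and a⋆a ∈ ζ.  Hence J = ζ + ℤpa is an
   ideal of A and I = ℤpa + ℤp²(a⋆a) is an ideal of J; A being a T-brace, I is
   an ideal of A, so p(a⋆a) = a ⋆ pa = pna + p²t(a⋆a) for some integers n, t.
   Then pna ∈ ζ, so pn(a⋆a) = a ⋆ pna = 0 and (pn)²a = 0, forcing n = 0 as a
   has infinite order.  Now y = p(a⋆a) satisfies pt·y = y, while a⋆a is a
   torsion element of ζ, hence killed by some p^e, so (pt)^e·y = 0 and y = 0. *)

From HB Require Import structures.
From mathcomp Require Import all_boot all_order all_algebra.
Set Implicit Arguments.
Unset Strict Implicit.
Unset Printing Implicit Defensive.
Import GRing.Theory.
Local Open Scope ring_scope.

Lemma torsion_mulrz (V : zmodType) (x : V) (k : int) :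
  k != 0 -> x *~ k = 0 -> exists2 n, (0 < n)%N & x *+ n = 0.
Proof.
case: k => n; first by case: n => // n _ xn; exists n.+1.
by rewrite NegzE mulrNz => _ /eqP; rewrite oppr_eq0 => /eqP; exists n.+1.
Qed.

Lemma fixed_mulrz_nilpotent_eq0 (V : zmodType) (y : V) (s : int) (e : nat) :
  y *~ s = y -> y *~ (s ^+ e) = 0 -> y = 0.
Proof.
move=> ys; suff -> : y *~ (s ^+ e) = y by [].
by elim: e => [|e IH]; rewrite ?mulr1z // exprSr mulrzA IH.
Qed.

Lemma mulz_prime_neq1 (p : nat) (t : int) : prime p -> p%:Z * t != 1.
Proof.
move=> p_prime; apply/eqP => /(congr1 absz); rewrite abszM absz_nat.
by move/eqP; rewrite muln_eq1 => /andP[/eqP p1 _]; rewrite p1 in p_prime.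
Qed.

Section BraceStar.
Variables (V : zmodType) (B : brace V).
Local Notation "x · y" := (bmul B x y) (at level 40, left associativity).
Local Notation "x ⋆ y" := (bstar B x y) (at level 40, left associativity).

Lemma bmulr0 x : x · 0 = x.
Proof.
have := bmulDr B x 0 0; rewrite addr0 -addrA -{1}[x · 0]addr0 => /addrI h.
by apply/eqP; rewrite -subr_eq0 -h.
Qed.

Lemma bone0 : bone B = 0.
Proof. by rewrite -[LHS]bmulr0 bmul1g. Qed.

Lemma bmulE x y : x · y = x + y + x ⋆ y.
Proof. by rewrite /bstar -[x · y - x - y]addrA -opprD addrC addNKr. Qed.

Lemma bstar0r x : x ⋆ 0 = 0.
Proof. by rewrite /bstar bmulr0 subrr sub0r oppr0. Qed.

Lemma bstar0l x : 0 ⋆ x = 0.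
Proof. by rewrite /bstar -bone0 bmul1g bone0 subr0 subrr. Qed.

Lemma bstarDr x y z : x ⋆ (y + z) = x ⋆ y + x ⋆ z.
Proof.
rewrite /bstar bmulDr addrACA -opprD addrACA.
by rewrite -[x · y + x · z - x - x]addrA.
Qed.

Lemma bstar_is_nmod_morphism x : nmod_morphism (bstar B x).
Proof. by split; [exact: bstar0r | exact: bstarDr]. Qed.

HB.instance Definition _ x :=
  GRing.isNmodMorphism.Build V V (bstar B x) (bstar_is_nmod_morphism x).

Lemma bstar_bmull x y z : (x · y) ⋆ z = x ⋆ (y ⋆ z) + x ⋆ z + y ⋆ z.
Proof.
apply: (addrI (x · y + z)); rewrite -(bmulE (x · y)) -bmulA bmulE (bmulE y z).
by rewrite 2!raddfD (bmulE x y) [LHS](AC ((1*3)*3) (((1*2*5)*3)*(7*6*4))).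
Qed.

Lemma zeta_bstarl w x : zeta B w -> w ⋆ x = 0.
Proof. by move=> /(_ x) []. Qed.

Lemma zeta_bstarr w x : zeta B w -> x ⋆ w = 0.
Proof. by move=> /(_ x) []. Qed.

Lemma zeta0 : zeta B 0.
Proof. by move=> x; rewrite bstar0l bstar0r. Qed.

Lemma bmul_zetal w y : zeta B w -> w · y = w + y.
Proof. by move=> zw; rewrite bmulE zeta_bstarl ?addr0. Qed.

Lemma binv_zeta w : zeta B w -> binv B w = - w.
Proof.
by move=> zw; apply/eqP; rewrite -addr_eq0 addrC -bmul_zetal // bmulgV bone0.
Qed.

Lemma zetaN w : zeta B w -> zeta B (- w).
Proof.
move=> zw x; split; last by rewrite raddfN /= zeta_bstarr ?oppr0.
have := bstar_bmull (binv B w) w x.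
by rewrite bmulVg bone0 bstar0l (zeta_bstarl x zw) raddf0 add0r addr0 binv_zeta.
Qed.

Lemma zetaD u v : zeta B u -> zeta B v -> zeta B (u + v).
Proof.
move=> zu zv x; split; last by rewrite raddfD /= !zeta_bstarr ?addr0.
rewrite -bmul_zetal // bstar_bmull (zeta_bstarl x zv) (zeta_bstarl x zu).
by rewrite raddf0 !addr0.
Qed.

Lemma zetaMz w k : zeta B w -> zeta B (w *~ k).
Proof.
move=> zw; elim/int_rec: k => [|n IH|n IH]; first by rewrite mulr0z; apply: zeta0.
  by rewrite -addn1 PoszD mulrzDr; apply: zetaD.
by rewrite -addn1 PoszD opprD mulrzDr mulrN1z; apply: zetaD => //; apply: zetaN.
Qed.

Lemma bstarDl_zeta u v x :
  zeta B (u ⋆ v) -> (u + v) ⋆ x = u ⋆ (v ⋆ x) + u ⋆ x + v ⋆ x.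
Proof.
move=> zuv; have zw : zeta B (binv B (u ⋆ v)) by rewrite binv_zeta //; apply: zetaN.
(* Removing the central term u ⋆ v from u · v leaves u + v. *)
have <- : (u · v) · binv B (u ⋆ v) = u + v.
  by rewrite bmulE (zeta_bstarr _ zw) addr0 binv_zeta // bmulE addrK.
by rewrite bstar_bmull (zeta_bstarl x zw) raddf0 add0r addr0 bstar_bmull.
Qed.

Lemma zeta2_bstarl u x : zeta2 B u -> zeta B (u ⋆ x).
Proof. by move=> /(_ x) []. Qed.

Lemma zeta2_bstarr u x : zeta2 B u -> zeta B (x ⋆ u).
Proof. by move=> /(_ x) []. Qed.

Lemma zeta_zeta2 w : zeta B w -> zeta2 B w.
Proof. by move=> zw x; rewrite zeta_bstarl // zeta_bstarr //; split; apply: zeta0. Qed.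

Lemma bstarDl_zeta2 u v x :
  zeta2 B u -> zeta2 B v -> (u + v) ⋆ x = u ⋆ x + v ⋆ x.
Proof.
move=> zu zv; rewrite bstarDl_zeta; last exact: zeta2_bstarl.
by rewrite (zeta_bstarr _ (zeta2_bstarl x zv)) add0r.
Qed.

Lemma zeta2D u v : zeta2 B u -> zeta2 B v -> zeta2 B (u + v).
Proof.
move=> zu zv x; rewrite bstarDl_zeta2 // raddfD /=.
by split; apply: zetaD; first [exact: zeta2_bstarl | exact: zeta2_bstarr].
Qed.

Lemma bstarNl_zeta2 u x : zeta2 B u -> (- u) ⋆ x = - (u ⋆ x).
Proof.
move=> zu; have zuNu : zeta B (u ⋆ - u) by rewrite raddfN; apply/zetaN/zeta2_bstarl.
have := bstarDl_zeta x zuNu; rewrite subrr bstar0l => /esym /eqP.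
rewrite addr_eq0 => /eqP e.
(* The identity itself exhibits (- u) ⋆ x as central, which kills its first term. *)
have eNu : (- u) ⋆ x = - (u ⋆ ((- u) ⋆ x) + u ⋆ x) by rewrite e opprK.
have zNu : zeta B ((- u) ⋆ x) by rewrite eNu; apply/zetaN/zetaD; apply: zeta2_bstarl.
by rewrite eNu (zeta_bstarr _ zNu) add0r.
Qed.

Lemma zeta2N u : zeta2 B u -> zeta2 B (- u).
Proof.
move=> zu x; rewrite bstarNl_zeta2 // raddfN /=.
by split; apply: zetaN; [apply: zeta2_bstarl | apply: zeta2_bstarr].
Qed.

Lemma zeta2Mz u k : zeta2 B u -> zeta2 B (u *~ k).
Proof.
move=> zu; elim/int_rec: k => [|n IH|n IH].
- by rewrite mulr0z; apply/zeta_zeta2/zeta0.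
- by rewrite -addn1 PoszD mulrzDr; apply: zeta2D.
- by rewrite -addn1 PoszD opprD mulrzDr mulrN1z; apply: zeta2D => //; apply: zeta2N.
Qed.

Lemma bstarMzl_zeta2 u k x : zeta2 B u -> (u *~ k) ⋆ x = (u ⋆ x) *~ k.
Proof.
move=> zu; elim/int_rec: k => [|n IH|n IH]; first by rewrite !mulr0z bstar0l.
  by rewrite -addn1 PoszD !mulrzDr bstarDl_zeta2 ?IH //; apply: zeta2Mz.
rewrite -addn1 PoszD opprD !mulrzDr !mulrN1z bstarDl_zeta2 ?IH ?bstarNl_zeta2 //.
  exact: zeta2Mz.
exact: zeta2N.
Qed.

Lemma bstar_cyclic_zeta a r r' z z' : zeta2 B a -> zeta B z -> zeta B z' ->
  (a *~ r + z) ⋆ (a *~ r' + z') = (a ⋆ a) *~ (r * r').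
Proof.
move=> za zz zz'; rewrite bstarDl_zeta2; [|exact: zeta2Mz|exact: zeta_zeta2].
rewrite (zeta_bstarl _ zz) addr0 bstarMzl_zeta2 // raddfD /= (zeta_bstarr _ zz').
by rewrite addr0 raddfMz -mulrzA mulrC.
Qed.

Lemma binv_zeta2 x : zeta2 B x -> binv B x = - x - x ⋆ (- x).
Proof.
move=> zx; have e : x + binv B x + x ⋆ binv B x = 0 by rewrite -bmulE bmulgV bone0.
have eb : binv B x = - x - x ⋆ binv B x.
  by apply/eqP; rewrite -opprD -addr_eq0 addrC addrAC e.
rewrite {1}eb; congr (_ - _).
by rewrite {1}eb raddfB /= (zeta_bstarr _ (zeta2_bstarl _ zx)) subr0.
Qed.

Lemma subbrace_zeta2 (S : V -> Prop) :
  S 0 -> (forall x y, S x -> S y -> S (x - y)) ->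
  (forall x, S x -> zeta2 B x) -> (forall x y, S x -> S y -> S (x ⋆ y)) ->
  subbrace B S.
Proof.
move=> S0 SB S2 Sstar.
have SN x : S x -> S (- x) by move=> Sx; rewrite -sub0r; apply: SB.
have SD x y : S x -> S y -> S (x + y).
  by move=> Sx /SN SNy; rewrite -[y]opprK; apply: SB.
split; rewrite ?bone0 //.
- by move=> x y Sx Sy; rewrite bmulE; apply: (SD); [apply: (SD) | apply: (Sstar)].
- move=> x Sx; rewrite binv_zeta2; last exact: S2.
  by apply: (SB); [apply: (SN) | apply: (Sstar) => //; apply: (SN)].
Qed.
End BraceStar.

Section CyclicIdeals.
Variables (V : zmodType) (B : brace V) (a : V).
Hypothesis za : zeta2 B a.
Local Notation "x ⋆ y" := (bstar B x y) (at level 40, left associativity).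

Definition zeta_cyclic (q : int) (v : V) : Prop :=
  exists n z, zeta B z /\ v = a *~ (q * n) + z.

Definition cyclic_pair (q : int) (v : V) : Prop :=
  exists n t, v = a *~ (q * n) + (a ⋆ a) *~ (q * q * t).

Lemma zeta_cyclic_zeta2 q v : zeta_cyclic q v -> zeta2 B v.
Proof. by case=> n [z [zz ->]]; apply: zeta2D; [apply: zeta2Mz | apply: zeta_zeta2]. Qed.

Lemma zeta_zeta_cyclic q z : zeta B z -> zeta_cyclic q z.
Proof. by move=> zz; exists 0, z; rewrite mulr0 mulr0z add0r. Qed.

Lemma ideal_zeta_cyclic q : ideal B (zeta_cyclic q).
Proof.
split=> //; last first.
  move=> x y _ /zeta_cyclic_zeta2 zy.
  by split; apply: zeta_zeta_cyclic; [apply: zeta2_bstarr | apply: zeta2_bstarl].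
apply: subbrace_zeta2.
- exact/zeta_zeta_cyclic/zeta0.
- move=> x y [n [z [zz ->]]] [n' [z' [zz' ->]]]; exists (n - n'), (z - z').
  split; first by apply: zetaD => //; apply: zetaN.
  by rewrite mulrBr mulrzBr opprD addrACA.
- exact: zeta_cyclic_zeta2.
- by move=> x y /zeta_cyclic_zeta2 zx _; apply/zeta_zeta_cyclic/zeta2_bstarl.
Qed.

Lemma cyclic_pair_bstar q x y : zeta_cyclic q x -> cyclic_pair q y ->
  cyclic_pair q (x ⋆ y) /\ cyclic_pair q (y ⋆ x).
Proof.
case=> n [z [zz ->]] [n' [t ->]].
have zc : zeta B ((a ⋆ a) *~ (q * q * t)) by apply/zetaMz/zeta2_bstarl.
rewrite !bstar_cyclic_zeta //.
by split; [exists 0, (n * n') | exists 0, (n' * n)]; rewrite mulr0 mulr0z add0r mulrACA.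
Qed.

Lemma ideal_of_cyclic_pair q : ideal_of B (cyclic_pair q) (zeta_cyclic q).
Proof.
have pair_zeta_cyclic v : cyclic_pair q v -> zeta_cyclic q v.
  case=> n [t ->]; exists n, ((a ⋆ a) *~ (q * q * t)).
  by split=> //; apply/zetaMz/zeta2_bstarl.
split=> //; last exact: cyclic_pair_bstar.
apply: subbrace_zeta2.
- by exists 0, 0; rewrite !mulr0 !mulr0z addr0.
- move=> x y [n [t ->]] [n' [t' ->]]; exists (n - n'), (t - t').
  by rewrite !mulrBr !mulrzBr opprD addrACA.
- by move=> x /pair_zeta_cyclic /zeta_cyclic_zeta2.
- by move=> x y /pair_zeta_cyclic Jx Iy; case: (cyclic_pair_bstar Jx Iy).
Qed.

Lemma bstar_decomposition q : T_brace B ->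
  exists n t, (a ⋆ a) *~ q = a *~ (q * n) + (a ⋆ a) *~ (q * q * t).
Proof.
move=> TB; have J_ideal := ideal_zeta_cyclic q; have [J_sub _ _] := J_ideal.
have [_ _ I_star] := TB _ _ J_sub J_ideal (ideal_of_cyclic_pair q).
have qa_in : cyclic_pair q (a *~ q) by exists 1, 0; rewrite mulr1 mulr0 mulr0z addr0.
by have [] := I_star a _ I qa_in; rewrite raddfMz.
Qed.

Lemma bstar_decomposition_torsion q n t :
  (a ⋆ a) *~ q = a *~ (q * n) + (a ⋆ a) *~ (q * q * t) -> a *~ ((q * n) ^+ 2) = 0.
Proof.
set c := a ⋆ a => dec; have zc : zeta B c := zeta2_bstarl _ za.
have e : a *~ (q * n) = c *~ q - c *~ (q * q * t) by rewrite dec addrK.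
have cqn : c *~ (q * n) = 0.
  rewrite /c -raddfMz /=; apply: zeta_bstarr; rewrite e.
  by apply: zetaD; [|apply: zetaN]; apply: zetaMz.
rewrite expr2 mulrzA e mulrzBl -!mulrzA [q * _]mulrC [q * q * t * _]mulrC.
by rewrite !(mulrzA c (q * n)) cqn !mul0rz subrr.
Qed.

End CyclicIdeals.

Theorem lemma4p5 (V : zmodType) (B : brace V) (a : V) (p : nat) :
  T_brace B ->
  zeta2 B a ->
  (forall n : nat, (0 < n)%N -> a *+ n != 0) ->
  prime p ->
  (forall z : V, zeta B z -> forall n : nat, (0 < n)%N -> z *+ n = 0 ->
     exists k : nat, z *+ (p ^ k) = 0) ->
  (bstar B a a) *+ p = 0.
Proof.
move=> TB za a_inf p_prime zeta_ptors; set c := bstar B a a.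
have p_neq0 : p%:Z != 0 by rewrite eqz_nat -lt0n prime_gt0.
have [n [t dec]] := bstar_decomposition za p TB.
have n0 : n = 0.
  apply/eqP; apply: contraT => n_neq0.
  have pn_neq0 : (p%:Z * n) ^+ 2 != 0 by rewrite sqrf_eq0 mulf_neq0.
  have [k k_gt0 /eqP] := torsion_mulrz pn_neq0 (bstar_decomposition_torsion za dec).
  by rewrite (negPf (a_inf k k_gt0)).
rewrite n0 mulr0 mulr0z add0r -/c in dec.
have [k k_gt0 ck] : exists2 k, (0 < k)%N & c *+ k = 0.
  apply: (@torsion_mulrz _ c (p%:Z * (1 - p%:Z * t))).
    by rewrite mulf_neq0 // subr_eq0 eq_sym mulz_prime_neq1.
  by rewrite mulrBr mulr1 mulrA mulrzBr dec subrr.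
have [e ce] := zeta_ptors c (zeta2_bstarl a za) k k_gt0 ck.
have cpe : c *~ (p%:Z ^+ e) = 0 by rewrite -natz -natrX mulrz_nat.
rewrite pmulrn; apply: (@fixed_mulrz_nilpotent_eq0 _ _ (p%:Z * t) e).
  by rewrite -mulrzA mulrA.
by rewrite -mulrzA exprMn mulrCA mulrzA cpe mul0rz.
Qed.
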